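(* Let $(J,\mathcal F)$ and $w^S_j>0$ be as in the context, and assume $w^S_j\le w^T_j$ whenever $j\in S\subset T$ with $S,T\in\mathcal F$. Let $\mathbf c$ be $\mathcal F$-admissible and let $\mathrm{AG}_2$ on input $\mathbf c$ produce $\boldsymbol\pi$, $\boldsymbol\nu$, $S_k$, $\nu^{S_k}_j$. Then (a) for $1\le k\le n-1$, $\nu^{S_k}_j\le\nu^{S_{k+1}}_j$ for all $j\in S_{k+1}$; (b) for $1\le k<l\le n$, $$\nu_{\pi_k}=\nu^{S_k}_{\pi_k}\le\nu^{S_k}_{\pi_l}\le\nu^{S_{k+1}}_{\pi_l}\le\cdots\le\nu^{S_{l-1}}_{\pi_l}\le\nu^{S_l}_{\pi_l}=\nu_{\pi_l}.$$
   Context: $J$ finite, $|J|=n$; $\mathcal F\subseteq2^J$ with $\emptyset\in\mathcal F$, each nonempty $S\in\mathcal F$ having nonempty $\partial^-S=\{j\in S:S\setminus\{j\}\in\mathcal F\}$, each $S\in\mathcal F\ne J$ having $j\notin S$ with $S\cup\{j\}\in\mathcal F$. Coefficients $w^S_j>0$ for $j\in S\in\mathcal F$. $\mathrm{AG}_2$ on input $\mathbf c$: $S_1=J$, $\nu^{S_1}_j=c_j/w^{S_1}_j$, $\pi_1\in\arg\min\{\nu^{S_1}_j:j\in\partial^-S_1\}$, $\nu_{\pi_1}=\nu^{S_1}_{\pi_1}$; for $k=2..n$: $S_k=S_{k-1}\setminus\{\pi_{k-1}\}$, $\nu^{S_k}_j=\nu^{S_{k-1}}_j+(w^{S_{k-1}}_j/w^{S_k}_j-1)[\nu^{S_{k-1}}_j-\nu^{S_{k-1}}_{\pi_{k-1}}]$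 ($j\in S_k$), $\pi_k\in\arg\min\{\nu^{S_k}_j:j\in\partial^-S_k\}$, $\nu_{\pi_k}=\nu^{S_k}_{\pi_k}$. $\mathbf c$ is $\mathcal F$-admissible if $\nu_{\pi_1}\le\cdots\le\nu_{\pi_n}$. *)

From mathcomp Require Import all_boot all_order all_algebra.
Set Implicit Arguments. Unset Strict Implicit. Unset Printing Implicit Defensive.
Import Order.TTheory GRing.Theory Num.Theory.
Local Open Scope ring_scope.

(* Ground set J = 'I_n; a family F : {set {set 'I_n}}.
   Indices k of the algorithm are 0-based: step k (0 <= k < n) here is step k+1 of the paper. *)

Definition lowerbd (n : nat) (F : {set {set 'I_n}}) (S : {set 'I_n}) : {set 'I_n} :=
  [set j in S | (S :\ j) \in F].

Fixpoint AG2_S (n : nat) (pi : nat -> 'I_n) (k : nat) : {set 'I_n} :=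
  match k with
  | 0 => setT
  | k'.+1 => AG2_S pi k' :\ pi k'
  end.

Fixpoint AG2_nu (R : realFieldType) (n : nat) (w : {set 'I_n} -> 'I_n -> R)
    (c : 'I_n -> R) (pi : nat -> 'I_n) (k : nat) (j : 'I_n) : R :=
  match k with
  | 0 => c j / w setT j
  | k'.+1 =>
      AG2_nu w c pi k' j
      + (w (AG2_S pi k') j / w (AG2_S pi k'.+1) j - 1)
        * (AG2_nu w c pi k' j - AG2_nu w c pi k' (pi k'))
  end.

Definition is_AG2_run (R : realFieldType) (n : nat) (F : {set {set 'I_n}})
    (w : {set 'I_n} -> 'I_n -> R) (c : 'I_n -> R) (pi : nat -> 'I_n) : Prop :=
  forall k, (k < n)%N ->
    pi k \in lowerbd F (AG2_S pi k) /\
    (forall j, j \in lowerbd F (AG2_S pi k) -> AG2_nu w c pi k (pi k) <= AG2_nu w c pi k j).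

Definition AG2_val (R : realFieldType) (n : nat) (w : {set 'I_n} -> 'I_n -> R)
    (c : 'I_n -> R) (pi : nat -> 'I_n) (k : nat) : R := AG2_nu w c pi k (pi k).

Definition AG2_admissible (R : realFieldType) (n : nat)
    (w : {set 'I_n} -> 'I_n -> R) (c : 'I_n -> R) (pi : nat -> 'I_n) : Prop :=
  forall k, (k.+1 < n)%N -> AG2_val w c pi k <= AG2_val w c pi k.+1.

From mathcomp Require Import all_boot all_order all_algebra.
From mathcomp Require Import zify.
Set Implicit Arguments. Unset Strict Implicit. Unset Printing Implicit Defensive.
Import Order.TTheory GRing.Theory Num.Theory.
Local Open Scope ring_scope.

(* Since w^{S_{m+1}} <= w^{S_m}, the update nu^{S_{m+1}}_j - nu^{S_m}_j is a nonnegative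
   multiple of nu^{S_m}_j - nu_{pi_m}: values above the current minimum can only grow,
   values below it can only shrink.  Hence if nu^{S_k}_{pi_l} < nu_{pi_k} for some l > k,
   then nu^{S_m}_{pi_l} stays below nu_{pi_m} for m = k, ..., l by admissibility, which is
   absurd at m = l.  So nu_{pi_k} <= nu^{S_k}_{pi_l}, and every element of S_{k+1} is some
   pi_l with l > k, which gives both monotonicity statements. *)

Lemma setT_in_family (T : finType) (F : {set {set T}}) (S : {set T}) :
  S \in F ->
  (forall S, S \in F -> S != setT -> exists2 j, j \notin S & (j |: S) \in F) ->
  setT \in F.
Proof.
move=> SF extF; move Hd: (#|T| - #|S|)%N => d.
elim: d S Hd SF => [|d IH] S Hd SF.
  suff -> : setT = S by [].
  by apply/eqP; rewrite eq_sym eqEcard subsetT cardsT; lia.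
have [SeT | SnT] := eqVneq S setT; first by rewrite -SeT.
have [j jS jSF] := extF S SF SnT.
by apply: (IH (j |: S)) => //; move: Hd; rewrite cardsU1 jS; lia.
Qed.

Section RemovalSequence.

Variables (n : nat) (pi : nat -> 'I_n).

Lemma AG2_S_subset m l : (m <= l)%N -> AG2_S pi l \subset AG2_S pi m.
Proof.
elim: l => [|l IH]; first by rewrite leqn0 => /eqP ->.
rewrite leq_eqVlt => /predU1P [-> // | /IH]; exact/subset_trans/subD1set.
Qed.

Hypothesis pi_in_S : forall k, (k < n)%N -> pi k \in AG2_S pi k.

Lemma card_AG2_S k : (k <= n)%N -> #|AG2_S pi k| = (n - k)%N.
Proof.
elim: k => [|k IH] Hk /=; first by rewrite cardsT card_ord subn0.
have := cardsD1 (pi k) (AG2_S pi k).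
by rewrite pi_in_S // IH ?(ltnW Hk) // add1n subnS => ->.
Qed.

Lemma AG2_S_end : AG2_S pi n = set0.
Proof. by apply/eqP; rewrite -cards_eq0 card_AG2_S ?subnn. Qed.

Lemma mem_AG2_S m j :
  j \in AG2_S pi m -> exists2 l, (m <= l < n)%N & j = pi l.
Proof.
move Hd: (n - m)%N => d; elim: d m Hd => [|d IH] m Hd jS.
  have /subsetP /(_ j jS) : AG2_S pi m \subset AG2_S pi n by apply: AG2_S_subset; lia.
  by rewrite AG2_S_end inE.
have [-> | jnpi] := eqVneq j (pi m); first by exists m => //; lia.
have jS1 : j \in AG2_S pi m.+1 by rewrite !inE jnpi.
have [l ml ->] := IH m.+1 ltac:(lia) jS1.
by exists l => //; lia.
Qed.

End RemovalSequence.

Section AG2Run.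

Variables (R : realFieldType) (n : nat) (F : {set {set 'I_n}}).
Variables (w : {set 'I_n} -> 'I_n -> R) (c : 'I_n -> R) (pi : nat -> 'I_n).

Hypothesis set0_in_F : set0 \in F.
Hypothesis extend_in_F :
  forall S, S \in F -> S != setT -> exists2 j, j \notin S & (j |: S) \in F.
Hypothesis w_gt0 : forall S j, S \in F -> j \in S -> 0 < w S j.
Hypothesis w_mono :
  forall S T j, S \in F -> T \in F -> S \subset T -> j \in S -> w S j <= w T j.
Hypothesis run : is_AG2_run F w c pi.
Hypothesis admissible : AG2_admissible w c pi.

Lemma pi_in_AG2_S k : (k < n)%N -> pi k \in AG2_S pi k.
Proof. by case/run; rewrite inE => /andP []. Qed.

Lemma AG2_S_in_F k : (k <= n)%N -> AG2_S pi k \in F.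
Proof.
case: k => [_ | k /run []]; first exact: setT_in_family set0_in_F extend_in_F.
by rewrite inE => /andP [].
Qed.

Lemma AG2_weight_ratio_ge0 m j : (m < n)%N -> j \in AG2_S pi m.+1 ->
  0 <= w (AG2_S pi m) j / w (AG2_S pi m.+1) j - 1.
Proof.
move=> mn jS.
rewrite subr_ge0 ler_pdivlMr ?mul1r; last exact: w_gt0 (AG2_S_in_F mn) jS.
apply: w_mono jS; [exact: AG2_S_in_F | exact: AG2_S_in_F (ltnW mn) | exact: subD1set].
Qed.

Lemma AG2_nu_step_ge m j : (m < n)%N -> j \in AG2_S pi m.+1 ->
  AG2_val w c pi m <= AG2_nu w c pi m j -> AG2_nu w c pi m j <= AG2_nu w c pi m.+1 j.
Proof.
move=> mn jS val_le_j; rewrite /= lerDl.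
by apply: mulr_ge0; [exact: AG2_weight_ratio_ge0 | rewrite subr_ge0].
Qed.

Lemma AG2_nu_step_le m j : (m < n)%N -> j \in AG2_S pi m.+1 ->
  AG2_nu w c pi m j <= AG2_val w c pi m -> AG2_nu w c pi m.+1 j <= AG2_nu w c pi m j.
Proof.
move=> mn jS j_le_val; rewrite /= gerDl.
by apply: mulr_ge0_le0; [exact: AG2_weight_ratio_ge0 | rewrite subr_le0].
Qed.

Lemma AG2_val_le_nu k l : (k <= l)%N -> (l < n)%N ->
  AG2_val w c pi k <= AG2_nu w c pi k (pi l).
Proof.
move=> kl ln; move Hd: (l - k)%N => d; elim: d k kl Hd => [|d IH] k kl Hd.
  by have -> : k = l by lia.
have k1n : (k.+1 < n)%N by lia.
have lS : pi l \in AG2_S pi k.+1.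
  by apply: subsetP (pi_in_AG2_S ln); apply: AG2_S_subset; lia.
have IHk := IH k.+1 ltac:(lia) ltac:(lia).
rewrite leNgt; apply/negP => lt_lk.
have shrink := AG2_nu_step_le (ltnW k1n) lS (ltW lt_lk).
have := le_lt_trans (le_trans IHk shrink) (lt_le_trans lt_lk (admissible k1n)).
by rewrite ltxx.
Qed.

Lemma AG2_nu_increasing k j : j \in AG2_S pi k.+1 ->
  AG2_nu w c pi k j <= AG2_nu w c pi k.+1 j.
Proof.
move=> jS; have [l /andP [kl ln] jl] := mem_AG2_S pi_in_AG2_S jS.
apply: AG2_nu_step_ge jS _; first lia.
by rewrite jl; apply: AG2_val_le_nu; lia.
Qed.

End AG2Run.

Theorem lemma4 (R : realFieldType) (n : nat) (F : {set {set 'I_n}})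
    (w : {set 'I_n} -> 'I_n -> R) (c : 'I_n -> R) (pi : nat -> 'I_n)
    (HF0 : set0 \in F)
    (HFdown : forall S, S \in F -> S != set0 -> lowerbd F S != set0)
    (HFup : forall S, S \in F -> S != setT -> exists2 j, j \notin S & (j |: S) \in F)
    (Hwpos : forall S j, S \in F -> j \in S -> 0 < w S j)
    (Hwmono : forall S T j, S \in F -> T \in F -> S \subset T -> j \in S -> w S j <= w T j)
    (Hrun : is_AG2_run F w c pi)
    (Hadm : AG2_admissible w c pi) :
  (* (a) *)
  (forall k j, (k.+1 < n)%N -> j \in AG2_S pi k.+1 ->
     AG2_nu w c pi k j <= AG2_nu w c pi k.+1 j) /\
  (* (b) *)
  (forall k l, (k < l)%N -> (l < n)%N ->
     AG2_val w c pi k = AG2_nu w c pi k (pi k) /\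
     AG2_nu w c pi k (pi k) <= AG2_nu w c pi k (pi l) /\
     (forall m, (k <= m)%N -> (m < l)%N ->
        AG2_nu w c pi m (pi l) <= AG2_nu w c pi m.+1 (pi l)) /\
     AG2_nu w c pi l (pi l) = AG2_val w c pi l).
Proof.
have increasing := AG2_nu_increasing HF0 HFup Hwpos Hwmono Hrun Hadm.
have val_le_nu := AG2_val_le_nu HF0 HFup Hwpos Hwmono Hrun Hadm.
split=> [k j _ | k l kl ln]; first exact: increasing.
split=> //; split; first exact: val_le_nu (ltnW kl) ln.
split=> // m km ml; apply: increasing.
apply: subsetP (pi_in_AG2_S Hrun ln); exact: AG2_S_subset.
Qed.
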